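(* Let $\lambda,n_c,g_+,g_->0$ with $n_c<1$, let $c_B>\bar c>0$, and let $$\psi(n)=\begin{cases}\lambda,& n=1,\\ \lambda n_c,& 0<n<1,\\ 0,& n=0,\end{cases}\qquad G(c)=\begin{cases} g_+,& c>\bar c,\\ -g_-,& c<\bar c.\end{cases}$$ Set $\alpha=\sqrt{g_-/(g_++g_-)}\in(0,1)$ and $$\mathcal F(R)=\frac{\bar c}{c_B}\Big(\cosh(\sqrt\lambda R)+\sqrt{n_c}\sinh(\sqrt\lambda R)\Big)-\sqrt{n_c}\sinh\big(\sqrt\lambda(1-\alpha)R\big)-\cosh\big(\sqrt\lambda(1-\alpha)R\big).$$ Then $\mathcal F$ has a unique positive root $R$, and there is a unique monotone traveling wave: a unique pair $\sigma>0$, $R>0$ such that the system (TW-vitro) below admits a nonnegative solution with $c'\ge0$. This $R$ is the unique positive root of $\mathcal F$, and $$\sigma=R\big(\sqrt{(g_++g_-)g_-}-g_-\big).$$ Moreover $\sigma$ increases with respect to $c_B$ and decreases with respect to $\bar c$.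
   Context: System (TW-vitro), with unknowns $\sigma>0$, $R>0$ and functions $n,c,p$ on $\mathbb{R}$: (i) $-\sigma n'=nG(c)$ on $(-\infty,0]$; (ii) $n=1$ on $[0,R]$ and $n=0$ on $(R,+\infty)$; (iii) $c$ is $C^1$ on $(-\infty,R]$ and satisfies $c''=\psi(n)c$ on $(-\infty,R]$, with $c(R)=c_B$ (and $c=c_B$ on $(R,+\infty)$); (iv) $-p''=G(c)$ on $[0,R]$, $p(0)=p(R)=0$, $p\ge 0$, and $p=0$ outside $[0,R]$; (v) jump relations: $\sigma=-p'(R^-)$, $n(0)=1$, $p'(0^+)=0$. The solution $c$ is required to be bounded on $(-\infty,0]$. *)

From Stdlib Require Export Reals Lra List.
Export ListNotations.
Open Scope R_scope.

(* psi(n) = lam if n = 1, lam*nc if 0 < n < 1, 0 if n = 0.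
   Outside [0,1] psi is undefined in the paper; we return 0 there, but
   solutions are required to satisfy 0 <= n <= 1, so this value is never used. *)
Definition psi (lam nc n : R) : R :=
  if Req_EM_T n 1 then lam
  else if Rlt_dec 0 n then (if Rlt_dec n 1 then lam * nc else 0) else 0.

(* G(cbar) is undefined in the paper;
   we return 0 there (the equations involving G are only required off a finite
   exceptional set, see monotone_TW_solution). *)
Definition G (gp gm cbar c : R) : R :=
  if Rlt_dec cbar c then gp else if Rlt_dec c cbar then - gm else 0.

Definition alpha (gp gm : R) : R := sqrt (gm / (gp + gm)).

Definition F (lam nc gp gm cbar cB Rr : R) : R :=
  cbar / cB * (cosh (sqrt lam * Rr) + sqrt nc * sinh (sqrt lam * Rr))
  - sqrt nc * sinh (sqrt lam * (1 - alpha gp gm) * Rr)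
  - cosh (sqrt lam * (1 - alpha gp gm) * Rr).

(* (n, c, p) is a nonnegative solution of (TW-vitro) with unknowns sigma, Rr,
   with c' >= 0.  Second-order equations (and the first-order equation for n)
   are understood piecewise: the functions are C^0 / C^1 as stated, and the
   differential equation holds at every point off a finite exceptional set D
   (needed since G(c) and psi(n) are discontinuous). *)
Definition monotone_TW_solution (lam nc gp gm cbar cB sigma Rr : R)
    (n c p : R -> R) : Prop :=
  exists (D : list R) (dc dp : R -> R),
    (forall x, 0 <= n x <= 1) /\ (forall x, 0 <= c x) /\ (forall x, 0 <= p x) /\
    (* (i)  -sigma n' = n G(c) on (-oo,0] *)
    (forall x, x <= 0 -> continuity_pt n x) /\
    (forall x, x < 0 -> ~ In x D ->
        derivable_pt_lim n x (- (n x * G gp gm cbar (c x)) / sigma)) /\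
    (forall x, 0 <= x <= Rr -> n x = 1) /\
    (forall x, Rr < x -> n x = 0) /\
    (forall x, x <= Rr -> continuity_pt c x) /\
    (forall x, x < Rr -> derivable_pt_lim c x (dc x)) /\
    (forall x, x < Rr -> continuity_pt dc x) /\
    (exists l, limit1_in dc (fun x => x < Rr) l Rr) /\
    (forall x, x < Rr -> ~ In x D ->
        derivable_pt_lim dc x (psi lam nc (n x) * c x)) /\
    c Rr = cB /\ (forall x, Rr < x -> c x = cB) /\
    (exists M, forall x, x <= 0 -> Rabs (c x) <= M) /\
    (forall x, x < Rr -> 0 <= dc x) /\
    (forall x, 0 <= x <= Rr -> continuity_pt p x) /\
    (forall x, 0 < x < Rr -> derivable_pt_lim p x (dp x)) /\
    (forall x, 0 < x < Rr -> continuity_pt dp x) /\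
    (forall x, 0 < x < Rr -> ~ In x D ->
        derivable_pt_lim dp x (- G gp gm cbar (c x))) /\
    p 0 = 0 /\ p Rr = 0 /\
    (forall x, x < 0 \/ Rr < x -> p x = 0) /\
    (* (v) jump relations: sigma = -p'(Rr^-), n(0) = 1, p'(0^+) = 0 *)
    limit1_in dp (fun x => 0 < x < Rr) (- sigma) Rr /\
    n 0 = 1 /\
    limit1_in dp (fun x => 0 < x < Rr) 0 0.

Definition admits_monotone_TW (lam nc gp gm cbar cB sigma Rr : R) : Prop :=
  exists n c p : R -> R, monotone_TW_solution lam nc gp gm cbar cB sigma Rr n c p.

From Stdlib Require Import Reals Lra List.
From Coquelicot Require Import Coquelicot.
Open Scope R_scope.

(* For a monotone wave, [n] is an exponential behind the front
   and [c < cbar] there; boundedness of [c] forces [c'(0) = sqrt(lam nc) c(0)],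
   so [c] is a multiple of [cosh_k] on [[0, R]]; [c] crosses [cbar] at a point
   [xb], and the pressure equation, whose [p'] is piecewise affine, yields the
   speed [sigma] and [R - xb = alpha R], i.e. [F R = 0]. *)

Lemma limit1_of_continuity f Dom x0 :
  continuity_pt f x0 -> limit1_in f Dom (f x0) x0.
Proof.
  intros Hf eps Heps. destruct (Hf eps Heps) as [alp [Halp Hclose]].
  exists alp; split; [exact Halp|]. intros x [_ Hx].
  destruct (Req_dec x x0) as [->|Hne].
  - simpl; unfold Rdist. rewrite Rminus_diag, Rabs_R0; lra.
  - apply Hclose. repeat split; auto.
Qed.

Lemma adhDa_right x0 d : 0 < d -> adhDa (fun z => x0 < z < x0 + d) x0.
Proof.
  intros Hd alp Halp. exists (x0 + Rmin d alp / 2).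
  pose proof (Rmin_l d alp). pose proof (Rmin_r d alp). pose proof (Rmin_pos d alp Hd Halp).
  split; [lra|]. unfold Rdist. rewrite Rabs_right; lra.
Qed.

Lemma adhDa_left x0 d : 0 < d -> adhDa (fun z => x0 - d < z < x0) x0.
Proof.
  intros Hd alp Halp. exists (x0 - Rmin d alp / 2).
  pose proof (Rmin_l d alp). pose proof (Rmin_r d alp). pose proof (Rmin_pos d alp Hd Halp).
  split; [lra|]. unfold Rdist. rewrite Rabs_left; lra.
Qed.

Lemma limit1_value_by_agreement f h Dom A L x0 :
  adhDa A x0 -> (forall z, A z -> Dom z /\ f z = h z) ->
  limit1_in f Dom L x0 -> continuity_pt h x0 -> L = h x0.
Proof.
  intros HA Hagree Hlim Hh.
  apply (single_limit h A L (h x0) x0); [exact HA| |apply limit1_of_continuity, Hh].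
  apply limit1_ext with f; [intros z Hz; apply Hagree, Hz|].
  apply limit1_imp with Dom; [intros z Hz; apply Hagree, Hz| exact Hlim].
Qed.

Lemma continuity_pt_lower_bound f x0 m :
  continuity_pt f x0 -> m < f x0 ->
  exists d, 0 < d /\ forall x, Rabs (x - x0) < d -> m < f x.
Proof.
  intros Hf Hm. destruct (Hf (f x0 - m) ltac:(lra)) as [d [Hd Hclose]].
  exists d; split; [exact Hd|]. intros x Hx.
  destruct (Req_dec x x0) as [->|Hne]; [lra|].
  assert (Hdist : Rabs (f x - f x0) < f x0 - m) by (apply Hclose; repeat split; auto).
  apply Rabs_def2 in Hdist. lra.
Qed.

Lemma continuity_pt_interval_ext f g x a b :
  a < x < b -> (forall z, a < z < b -> f z = g z) ->
  continuity_pt g x -> continuity_pt f x.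
Proof.
  intros Hx Hfg Hg.
  apply (continuity_pt_locally_ext g f (Rmin (x - a) (b - x))); [apply Rmin_pos; lra| |exact Hg].
  intros z Hz. unfold Rdist in Hz.
  pose proof (Rmin_l (x - a) (b - x)). pose proof (Rmin_r (x - a) (b - x)).
  apply Rabs_def2 in Hz. symmetry. apply Hfg. lra.
Qed.

Lemma continuity_pt_glue f g1 g2 x0 d :
  0 < d ->
  (forall z, x0 - d < z <= x0 -> f z = g1 z) ->
  (forall z, x0 <= z < x0 + d -> f z = g2 z) ->
  continuity_pt g1 x0 -> continuity_pt g2 x0 -> continuity_pt f x0.
Proof.
  intros Hd H1 H2 C1 C2 eps Heps.
  destruct (C1 eps Heps) as [a1 [Ha1 K1]]. destruct (C2 eps Heps) as [a2 [Ha2 K2]].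
  set (m := Rmin d (Rmin a1 a2)).
  assert (Hm1 : m <= d) by apply Rmin_l.
  assert (Hm2 : m <= a1) by (eapply Rle_trans; [apply Rmin_r|apply Rmin_l]).
  assert (Hm3 : m <= a2) by (eapply Rle_trans; [apply Rmin_r|apply Rmin_r]).
  exists m; split; [repeat apply Rmin_pos; lra|].
  intros x [[_ Hx] Hdx]. simpl in *; unfold Rdist in *. apply Rabs_def2 in Hdx.
  destruct (Rle_dec x x0).
  - rewrite (H1 x), (H1 x0) by lra.
    apply K1. repeat split; auto. simpl; unfold Rdist. apply Rabs_def1; lra.
  - rewrite (H2 x), (H2 x0) by lra.
    apply K2. repeat split; auto. simpl; unfold Rdist. apply Rabs_def1; lra.
Qed.

Lemma derivable_pt_lim_glue f g1 g2 x0 d l :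
  0 < d ->
  (forall z, x0 - d < z <= x0 -> f z = g1 z) ->
  (forall z, x0 <= z < x0 + d -> f z = g2 z) ->
  derivable_pt_lim g1 x0 l -> derivable_pt_lim g2 x0 l -> derivable_pt_lim f x0 l.
Proof.
  intros Hd H1 H2 C1 C2 eps Heps.
  destruct (C1 eps Heps) as [[a1 Ha1] K1]. destruct (C2 eps Heps) as [[a2 Ha2] K2].
  set (m := Rmin d (Rmin a1 a2)).
  assert (Hm1 : m <= d) by apply Rmin_l.
  assert (Hm2 : m <= a1) by (eapply Rle_trans; [apply Rmin_r|apply Rmin_l]).
  assert (Hm3 : m <= a2) by (eapply Rle_trans; [apply Rmin_r|apply Rmin_r]).
  assert (Hm : 0 < m) by (repeat apply Rmin_pos; lra).
  exists (mkposreal m Hm). intros h Hh Hha. simpl in *. apply Rabs_def2 in Hha.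
  destruct (Rle_dec h 0).
  - rewrite (H1 (x0 + h)), (H1 x0) by lra. apply K1; auto. apply Rabs_def1; simpl; lra.
  - rewrite (H2 (x0 + h)), (H2 x0) by lra. apply K2; auto. apply Rabs_def1; simpl; lra.
Qed.

Lemma continuity_of_derivative f x l : derivable_pt_lim f x l -> continuity_pt f x.
Proof. intros H. apply derivable_continuous_pt. exists l. exact H. Qed.

Lemma exists_not_in (D : list R) a b : a < b -> exists y, a < y < b /\ ~ In y D.
Proof.
  revert a b. induction D as [|d D IH]; intros a b Hab.
  - exists ((a + b) / 2). split; [lra| auto].
  - destruct (Rle_dec d a) as [H1|H1]; [|destruct (Rle_dec b d) as [H2|H2]].
    + destruct (IH a b Hab) as [y [Hy Ny]]. exists y. split; [exact Hy|].
      intros [E|E]; [lra| auto].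
    + destruct (IH a b Hab) as [y [Hy Ny]]. exists y. split; [exact Hy|].
      intros [E|E]; [lra| auto].
    + destruct (IH a d ltac:(lra)) as [y [Hy Ny]]. exists y. split; [lra|].
      intros [E|E]; [lra| auto].
Qed.

(* Mean value theorem: a nonnegative derivative makes a function nondecreasing.
   The derivative is extended by 0 at the end points, where the mean value
   point may fall. *)
Lemma nondecreasing_of_derivative a b f df :
  a <= b -> (forall x, a <= x <= b -> continuity_pt f x) ->
  (forall x, a < x < b -> derivable_pt_lim f x (df x) /\ 0 <= df x) -> f a <= f b.
Proof.
  intros Hab Hc Hd.
  set (df' := fun x => if Rlt_dec a x then if Rlt_dec x b then df x else 0 else 0).
  destruct (MVT_gen f a b df') as [c [Hc1 Hc2]];
    rewrite ?Rmin_left, ?Rmax_right in * by lra.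
  - intros x Hx. apply is_derive_Reals. unfold df'.
    destruct (Rlt_dec a x); [|lra]. destruct (Rlt_dec x b); [|lra]. apply Hd, Hx.
  - exact Hc.
  - assert (0 <= df' c).
    { unfold df'. destruct (Rlt_dec a c); [|lra]. destruct (Rlt_dec c b); [|lra].
      apply Hd; lra. }
    nra.
Qed.

Lemma increasing_of_derivative a b f df :
  a < b -> (forall x, a <= x <= b -> derivable_pt_lim f x (df x)) ->
  (forall x, a < x < b -> 0 < df x) -> f a < f b.
Proof.
  intros Hab Hd Hpos. destruct (MVT_cor2 f df a b Hab Hd) as [c [Hc Hcab]].
  pose proof (Hpos c Hcab). nra.
Qed.

Lemma nondecreasing_of_derivative_except (D : list R) a b f df :
  a <= b -> (forall x, a <= x <= b -> continuity_pt f x) ->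
  (forall x, a < x < b -> ~ In x D -> derivable_pt_lim f x (df x) /\ 0 <= df x) ->
  f a <= f b.
Proof.
  revert a b. induction D as [|d D IH]; intros a b Hab Hc Hd.
  - apply (nondecreasing_of_derivative a b f df Hab Hc). intros x Hx; apply Hd; auto.
  - assert (Hd' : forall x, a < x < b -> x <> d -> ~ In x D ->
                  derivable_pt_lim f x (df x) /\ 0 <= df x).
    { intros x Hx Hxd Hn. apply Hd; [exact Hx|]. intros [E|E]; [congruence| auto]. }
    destruct (Rlt_dec a d) as [H1|H1]; [destruct (Rlt_dec d b) as [H2|H2]|].
    + apply Rle_trans with (f d).
      * apply IH; [lra| intros; apply Hc; lra|]. intros x Hx Hn; apply Hd'; auto; lra.
      * apply IH; [lra| intros; apply Hc; lra|]. intros x Hx Hn; apply Hd'; auto; lra.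
    + apply IH; auto. intros x Hx Hn; apply Hd'; auto; lra.
    + apply IH; auto. intros x Hx Hn; apply Hd'; auto; lra.
Qed.

Lemma constant_of_derivative_except (D : list R) a b f :
  a <= b -> (forall x, a <= x <= b -> continuity_pt f x) ->
  (forall x, a < x < b -> ~ In x D -> derivable_pt_lim f x 0) -> f a = f b.
Proof.
  intros Hab Hc Hd. apply Rle_antisym.
  - apply (nondecreasing_of_derivative_except D a b f (fun _ => 0)); auto.
    intros x Hx Hn; split; [apply Hd; auto| lra].
  - assert (- f a <= - f b); [|lra].
    apply (nondecreasing_of_derivative_except D a b (fun x => - f x) (fun _ => 0)); auto.
    + intros x Hx. apply continuity_pt_opp, Hc, Hx.
    + intros x Hx Hn; split; [|lra]. rewrite <- Ropp_0.
      apply derivable_pt_lim_opp, Hd; auto.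
Qed.

Lemma exp_lt_1 x : x < 0 -> exp x < 1.
Proof. intros Hx. rewrite <- exp_0. apply exp_increasing, Hx. Qed.

Lemma exp_le_1 x : x <= 0 -> exp x <= 1.
Proof. intros [Hx| ->]; [left; apply exp_lt_1, Hx| rewrite exp_0; lra]. Qed.

Lemma derivable_pt_lim_exp_lin m x :
  derivable_pt_lim (fun t => exp (m * t)) x (m * exp (m * x)).
Proof. apply is_derive_Reals. auto_derive; auto. ring. Qed.

Lemma linear_ode_except (D : list R) a b f m :
  a <= b -> (forall x, a <= x <= b -> continuity_pt f x) ->
  (forall x, a < x < b -> ~ In x D -> derivable_pt_lim f x (m * f x)) ->
  f a * exp (- m * a) = f b * exp (- m * b).
Proof.
  intros Hab Hc Hd.
  apply (constant_of_derivative_except D a b (fun x => f x * exp (- m * x))); [exact Hab| |].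
  - intros x Hx. apply continuity_pt_mult; [apply Hc, Hx|].
    eapply continuity_of_derivative, derivable_pt_lim_exp_lin.
  - intros x Hx Hn.
    replace 0 with (m * f x * exp (- m * x) + f x * (- m * exp (- m * x))) by ring.
    apply (derivable_pt_lim_mult f (fun x => exp (- m * x))); [apply Hd; auto|].
    apply derivable_pt_lim_exp_lin.
Qed.

(* For [f'' = m^2 f], the combination [f' - m f] solves [g' = - m g], hence
   [(f' - m f) exp (m x)] is constant. *)
Lemma second_order_combination (D : list R) a b f df m :
  a <= b ->
  (forall x, a <= x <= b -> continuity_pt f x) ->
  (forall x, a <= x <= b -> continuity_pt df x) ->
  (forall x, a < x < b -> derivable_pt_lim f x (df x)) ->
  (forall x, a < x < b -> ~ In x D -> derivable_pt_lim df x (m * m * f x)) ->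
  (df a - m * f a) * exp (m * a) = (df b - m * f b) * exp (m * b).
Proof.
  intros Hab Hfc Hdfc Hf Hdf.
  replace (m * a) with (- - m * a) by ring. replace (m * b) with (- - m * b) by ring.
  apply (linear_ode_except D a b (fun x => df x - m * f x) (- m)); [exact Hab| |].
  - intros x Hx. apply continuity_pt_minus; [apply Hdfc, Hx|].
    apply continuity_pt_scal, Hfc, Hx.
  - intros x Hx Hn. replace (- m * (df x - m * f x)) with (m * m * f x - m * df x) by ring.
    apply derivable_pt_lim_minus; [apply Hdf; auto|]. apply derivable_pt_lim_scal, Hf, Hx.
Qed.

(* The profiles [cosh y + k sinh y] and its derivative [sinh y + k cosh y];
   the concentration in the proliferating zone is a multiple of the former. *)
Definition cosh_k (k y : R) : R := cosh y + k * sinh y.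
Definition sinh_k (k y : R) : R := sinh y + k * cosh y.

Lemma cosh_k_0 k : cosh_k k 0 = 1.
Proof. unfold cosh_k. rewrite cosh_0, sinh_0. ring. Qed.

Lemma sinh_k_0 k : sinh_k k 0 = k.
Proof. unfold sinh_k. rewrite cosh_0, sinh_0. ring. Qed.

Lemma derivable_pt_lim_cosh_k k a x :
  derivable_pt_lim (fun t => cosh_k k (a * t)) x (a * sinh_k k (a * x)).
Proof. apply is_derive_Reals. unfold cosh_k, sinh_k, cosh, sinh. auto_derive; auto. field. Qed.

Lemma derivable_pt_lim_sinh_k k a x :
  derivable_pt_lim (fun t => sinh_k k (a * t)) x (a * cosh_k k (a * x)).
Proof. apply is_derive_Reals. unfold cosh_k, sinh_k, cosh, sinh. auto_derive; auto. field. Qed.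

Lemma continuity_pt_cosh_k k a x : continuity_pt (fun t => cosh_k k (a * t)) x.
Proof. eapply continuity_of_derivative, derivable_pt_lim_cosh_k. Qed.

Lemma cosh_pos y : 0 < cosh y.
Proof. unfold cosh. pose proof (exp_pos y). pose proof (exp_pos (- y)). lra. Qed.

Lemma sinh_nonneg y : 0 <= y -> 0 <= sinh y.
Proof.
  intros [Hy| <-]; [|rewrite sinh_0; lra].
  left. rewrite <- sinh_0. apply sinh_lt, Hy.
Qed.

Lemma sinh_k_pos k y : 0 < k -> 0 <= y -> 0 < sinh_k k y.
Proof. intros Hk Hy. unfold sinh_k. pose proof (cosh_pos y). pose proof (sinh_nonneg y Hy). nra. Qed.

Lemma cosh_k_lt k y1 y2 : 0 < k -> 0 <= y1 < y2 -> cosh_k k y1 < cosh_k k y2.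
Proof.
  intros Hk Hy.
  replace y1 with (1 * y1) by ring. replace y2 with (1 * y2) by ring.
  apply (increasing_of_derivative y1 y2 (fun t => cosh_k k (1 * t))
           (fun t => 1 * sinh_k k (1 * t))); [lra| intros; apply derivable_pt_lim_cosh_k|].
  intros x Hx. rewrite !Rmult_1_l. apply sinh_k_pos; lra.
Qed.

Lemma cosh_k_ge_1 k y : 0 < k -> 0 <= y -> 1 <= cosh_k k y.
Proof.
  intros Hk [Hy| <-]; [|rewrite cosh_k_0; lra].
  left. rewrite <- (cosh_k_0 k). apply cosh_k_lt; lra.
Qed.

(* The Wronskian-type identity behind the monotonicity of [cosh_k] ratios. *)
Lemma sinh_k_cosh_k_cross k A B :
  sinh_k k A * cosh_k k B - cosh_k k A * sinh_k k B = (1 - k ^ 2) * sinh (A - B).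
Proof.
  unfold sinh_k, cosh_k, sinh, cosh. unfold Rminus.
  rewrite exp_plus, Ropp_plus_distr, Ropp_involutive, exp_plus, !exp_Ropp.
  pose proof (exp_pos A). pose proof (exp_pos B). field; lra.
Qed.

Lemma cosh_k_le_exp k y : 0 <= k <= 1 -> 0 <= y -> cosh_k k y <= exp y.
Proof.
  intros Hk Hy. assert (E : cosh y + sinh y = exp y) by (unfold cosh, sinh; field).
  unfold cosh_k. pose proof (sinh_nonneg y Hy). nra.
Qed.

Lemma cosh_k_ge_half_exp k y : 0 <= k -> 0 <= y -> exp y / 2 <= cosh_k k y.
Proof.
  intros Hk Hy. unfold cosh_k, cosh. pose proof (exp_pos (- y)). pose proof (sinh_nonneg y Hy). nra.
Qed.

(* For rates [0 < b < a] and [0 < k < 1], the ratio [cosh_k (a R) / cosh_k (b R)]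
   is increasing in [R >= 0]: its derivative has the sign of
   [(a - b) sinh_k(aR) cosh_k(bR) + b (1 - k^2) sinh((a - b) R)]. *)
Lemma cosh_k_ratio_increasing k a b R1 R2 :
  0 < k < 1 -> 0 < b < a -> 0 <= R1 < R2 ->
  cosh_k k (a * R1) / cosh_k k (b * R1) < cosh_k k (a * R2) / cosh_k k (b * R2).
Proof.
  intros Hk Hab HR.
  assert (Hpos : forall t, 0 <= t -> 0 < cosh_k k (b * t))
    by (intros t Ht; pose proof (cosh_k_ge_1 k (b * t) ltac:(lra) ltac:(nra)); lra).
  apply (increasing_of_derivative R1 R2 (fun t => cosh_k k (a * t) / cosh_k k (b * t))
    (fun t => (a * sinh_k k (a * t) * cosh_k k (b * t) - b * sinh_k k (b * t) * cosh_k k (a * t))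
              / (cosh_k k (b * t))²)); [lra| |].
  - intros t Ht.
    apply (derivable_pt_lim_div (fun t => cosh_k k (a * t)) (fun t => cosh_k k (b * t)));
      [apply derivable_pt_lim_cosh_k| apply derivable_pt_lim_cosh_k| pose proof (Hpos t); lra].
  - intros t Ht. apply Rdiv_lt_0_compat; [|unfold Rsqr; pose proof (Hpos t); nra].
    replace (a * sinh_k k (a * t) * cosh_k k (b * t) - b * sinh_k k (b * t) * cosh_k k (a * t))
      with ((a - b) * sinh_k k (a * t) * cosh_k k (b * t)
            + b * (sinh_k k (a * t) * cosh_k k (b * t) - cosh_k k (a * t) * sinh_k k (b * t)))
      by ring.
    rewrite sinh_k_cosh_k_cross.
    pose proof (sinh_k_pos k (a * t) ltac:(lra) ltac:(nra)). pose proof (Hpos t ltac:(lra)).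
    pose proof (sinh_nonneg (a * t - b * t) ltac:(nra)).
    assert (0 < 1 - k ^ 2) by nra.
    assert (0 < (a - b) * sinh_k k (a * t) * cosh_k k (b * t))
      by (repeat apply Rmult_lt_0_compat; lra).
    assert (0 <= b * ((1 - k ^ 2) * sinh (a * t - b * t)))
      by (apply Rmult_le_pos; [lra| apply Rmult_le_pos; lra]).
    lra.
Qed.

(* Uniqueness for [f'' = a^2 f] with initial slope [f'(0) = a k f(0)]:
   [f' + a f] and [f' - a f] are exponentials, and [f = f(0) cosh_k k (a x)]. *)
Lemma cosh_k_solution (D : list R) b f df a k :
  0 < a -> 0 <= b ->
  (forall x, 0 <= x <= b -> continuity_pt f x) ->
  (forall x, 0 <= x <= b -> continuity_pt df x) ->
  (forall x, 0 < x < b -> derivable_pt_lim f x (df x)) ->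
  (forall x, 0 < x < b -> ~ In x D -> derivable_pt_lim df x (a * a * f x)) ->
  df 0 = a * k * f 0 -> f b = f 0 * cosh_k k (a * b).
Proof.
  intros Ha Hb Hfc Hdfc Hf Hdf Hslope.
  pose proof (second_order_combination D 0 b f df a Hb Hfc Hdfc Hf Hdf) as Hminus.
  assert (Hplus : (df 0 - - a * f 0) * exp (- a * 0) = (df b - - a * f b) * exp (- a * b)).
  { apply (second_order_combination D 0 b f df (- a) Hb Hfc Hdfc Hf).
    intros x Hx Hn. replace (- a * - a) with (a * a) by ring. apply Hdf; auto. }
  rewrite Rmult_0_r, exp_0, Rmult_1_r in Hminus, Hplus.
  replace (- a * b) with (- (a * b)) in Hplus by ring. rewrite exp_Ropp in Hplus.
  unfold cosh_k, cosh, sinh. rewrite exp_Ropp.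
  pose proof (exp_pos (a * b)). set (E := exp (a * b)) in *.
  assert (Hfb : f b = ((df b - - a * f b) - (df b - a * f b)) / (2 * a)) by (field; lra).
  replace (df b - - a * f b) with ((df 0 - - a * f 0) * E) in Hfb by (rewrite Hplus; field; lra).
  replace (df b - a * f b) with ((df 0 - a * f 0) / E) in Hfb by (rewrite Hminus; field; lra).
  rewrite Hfb, Hslope. field. lra.
Qed.

Lemma G_above gp gm cbar x : cbar < x -> G gp gm cbar x = gp.
Proof. intros H. unfold G. destruct (Rlt_dec cbar x); [reflexivity| lra]. Qed.

Lemma G_below gp gm cbar x : x < cbar -> G gp gm cbar x = - gm.
Proof.
  intros H. unfold G. destruct (Rlt_dec cbar x); [lra|].
  destruct (Rlt_dec x cbar); [reflexivity| lra].
Qed.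

Lemma G_threshold gp gm cbar : G gp gm cbar cbar = 0.
Proof. unfold G. destruct (Rlt_dec cbar cbar); [lra|]. destruct (Rlt_dec cbar cbar); [lra| reflexivity]. Qed.

Lemma psi_one lam nc : psi lam nc 1 = lam.
Proof. unfold psi. destruct (Req_EM_T 1 1); [reflexivity| congruence]. Qed.

Lemma psi_partial lam nc x : 0 < x < 1 -> psi lam nc x = lam * nc.
Proof.
  intros H. unfold psi. destruct (Req_EM_T x 1); [lra|].
  destruct (Rlt_dec 0 x); [|lra]. destruct (Rlt_dec x 1); [reflexivity| lra].
Qed.

Lemma alpha_bounds gp gm : 0 < gp -> 0 < gm -> 0 < alpha gp gm < 1.
Proof.
  intros Hgp Hgm. unfold alpha.
  assert (0 < gm / (gp + gm) < 1).
  { split; [apply Rdiv_lt_0_compat; lra|].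
    apply (Rmult_lt_reg_r (gp + gm)); [lra|]. field_simplify; lra. }
  split; [apply sqrt_lt_R0; lra|]. rewrite <- sqrt_1. apply sqrt_lt_1; lra.
Qed.

Lemma alpha_square gp gm : 0 < gp -> 0 < gm -> (gp + gm) * alpha gp gm ^ 2 = gm.
Proof.
  intros Hgp Hgm. unfold alpha. simpl. rewrite Rmult_1_r, sqrt_sqrt; [field; lra|].
  apply Rmult_le_pos; [lra| left; apply Rinv_0_lt_compat; lra].
Qed.

Lemma front_equation_solution gp gm R x :
  0 < gp -> 0 < gm -> 0 <= x <= R ->
  (gp + gm) * (R - x) ^ 2 = gm * R ^ 2 -> R - x = alpha gp gm * R.
Proof.
  intros Hgp Hgm Hx Hfront. pose proof (alpha_bounds gp gm Hgp Hgm).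
  pose proof (alpha_square gp gm Hgp Hgm).
  assert (Hsq : (R - x) ^ 2 = (alpha gp gm * R) ^ 2) by (apply (Rmult_eq_reg_l (gp + gm)); nra).
  assert (Hprod : (R - x - alpha gp gm * R) * (R - x + alpha gp gm * R) = 0) by nra.
  apply Rmult_integral in Hprod as [|]; nra.
Qed.

Lemma sqrt_speed_alpha gp gm : 0 < gp -> 0 < gm ->
  sqrt ((gp + gm) * gm) = (gp + gm) * alpha gp gm.
Proof.
  intros Hgp Hgm. pose proof (alpha_bounds gp gm Hgp Hgm). pose proof (alpha_square gp gm Hgp Hgm).
  apply sqrt_lem_1; nra.
Qed.

Lemma speed_constant_pos gp gm : 0 < gp -> 0 < gm -> 0 < sqrt ((gp + gm) * gm) - gm.
Proof.
  intros Hgp Hgm. rewrite sqrt_speed_alpha by assumption.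
  pose proof (alpha_bounds gp gm Hgp Hgm). pose proof (alpha_square gp gm Hgp Hgm). nra.
Qed.

Lemma F_cosh_k lam nc gp gm cbar cB Rr :
  F lam nc gp gm cbar cB Rr = cbar / cB * cosh_k (sqrt nc) (sqrt lam * Rr)
                              - cosh_k (sqrt nc) (sqrt lam * (1 - alpha gp gm) * Rr).
Proof. unfold F, cosh_k. ring. Qed.

(* [F R = 0] says that the ratio of the concentration at the boundary [R] to
   the concentration at the threshold point [(1 - alpha) R] equals [cB / cbar]. *)
Definition front_ratio (lam nc gp gm Rr : R) : R :=
  cosh_k (sqrt nc) (sqrt lam * Rr) / cosh_k (sqrt nc) (sqrt lam * (1 - alpha gp gm) * Rr).

Section FrontRatio.

Variables lam nc gp gm : R.
Hypotheses (Hlam : 0 < lam) (Hnc : 0 < nc) (Hnc1 : nc < 1) (Hgp : 0 < gp) (Hgm : 0 < gm).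

Lemma sqrt_nc_bounds : 0 < sqrt nc < 1.
Proof. split; [apply sqrt_lt_R0, Hnc| rewrite <- sqrt_1; apply sqrt_lt_1; lra]. Qed.

Lemma sqrt_lam_pos : 0 < sqrt lam.
Proof. apply sqrt_lt_R0, Hlam. Qed.

Lemma front_rates : 0 < sqrt lam * (1 - alpha gp gm) < sqrt lam.
Proof. pose proof sqrt_lam_pos. pose proof (alpha_bounds gp gm Hgp Hgm). split; nra. Qed.

Lemma cosh_k_pos y : 0 <= y -> 0 < cosh_k (sqrt nc) y.
Proof. intros Hy. pose proof (cosh_k_ge_1 (sqrt nc) y (proj1 sqrt_nc_bounds) Hy). lra. Qed.

Lemma F_zero_iff cbar cB Rr : 0 < cbar -> 0 < cB -> 0 <= Rr ->
  F lam nc gp gm cbar cB Rr = 0 <-> front_ratio lam nc gp gm Rr = cB / cbar.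
Proof.
  intros Hcbar HcB HR. pose proof front_rates. rewrite F_cosh_k. unfold front_ratio.
  set (X := cosh_k (sqrt nc) (sqrt lam * Rr)).
  set (Y := cosh_k (sqrt nc) (sqrt lam * (1 - alpha gp gm) * Rr)).
  assert (0 < X) by (apply cosh_k_pos; pose proof sqrt_lam_pos; nra).
  assert (0 < Y) by (apply cosh_k_pos; nra).
  split; intros E.
  - replace Y with (cbar / cB * X) by lra. field. lra.
  - replace X with (cB / cbar * Y) by (rewrite <- E; field; lra). field. lra.
Qed.

Lemma front_ratio_increasing R1 R2 : 0 <= R1 < R2 ->
  front_ratio lam nc gp gm R1 < front_ratio lam nc gp gm R2.
Proof.
  intros HR. apply cosh_k_ratio_increasing; [apply sqrt_nc_bounds| apply front_rates| exact HR].
Qed.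

Lemma front_ratio_lt_inv R1 R2 : 0 <= R1 -> 0 <= R2 ->
  front_ratio lam nc gp gm R1 < front_ratio lam nc gp gm R2 -> R1 < R2.
Proof.
  intros H1 H2 Hlt. destruct (Rtotal_order R1 R2) as [|[<-|Hgt]]; [assumption| lra|].
  pose proof (front_ratio_increasing R2 R1 ltac:(lra)). lra.
Qed.

Lemma F_roots_order cbar cB cbar' cB' R1 R2 :
  0 < cbar -> 0 < cB -> 0 < cbar' -> 0 < cB' -> 0 < R1 -> 0 < R2 ->
  F lam nc gp gm cbar cB R1 = 0 -> F lam nc gp gm cbar' cB' R2 = 0 ->
  cB / cbar < cB' / cbar' -> R1 < R2.
Proof.
  intros Hc HB Hc' HB' HR1 HR2 HF1 HF2 Hlevel.
  apply F_zero_iff in HF1; [|lra..]. apply F_zero_iff in HF2; [|lra..].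
  apply front_ratio_lt_inv; lra.
Qed.

Lemma F_root_unique cbar cB R1 R2 : 0 < cbar -> 0 < cB -> 0 < R1 -> 0 < R2 ->
  F lam nc gp gm cbar cB R1 = 0 -> F lam nc gp gm cbar cB R2 = 0 -> R1 = R2.
Proof.
  intros Hc HB HR1 HR2 HF1 HF2.
  apply F_zero_iff in HF1; [|lra..]. apply F_zero_iff in HF2; [|lra..].
  destruct (Rtotal_order R1 R2) as [Hlt|[Heq|Hgt]]; [exfalso| exact Heq| exfalso].
  - pose proof (front_ratio_increasing R1 R2 ltac:(lra)). lra.
  - pose proof (front_ratio_increasing R2 R1 ltac:(lra)). lra.
Qed.

(* [F] has a positive root: [F 0 = cbar / cB - 1 < 0], and [F] becomes positive
   since [cosh_k] grows like [exp] and the outer rate exceeds the inner one. *)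
Lemma F_root_exists cbar cB : 0 < cbar -> cbar < cB ->
  exists Rr, 0 < Rr /\ F lam nc gp gm cbar cB Rr = 0.
Proof.
  intros Hcbar HcB.
  set (a := sqrt lam). set (b := sqrt lam * (1 - alpha gp gm)). set (k := sqrt nc).
  set (r := cbar / cB).
  assert (Hr : 0 < r < 1).
  { unfold r; split; [apply Rdiv_lt_0_compat; lra|].
    apply (Rmult_lt_reg_r cB); [lra|]. field_simplify; lra. }
  pose proof front_rates as Hab. fold b a in Hab. pose proof sqrt_nc_bounds as Hk. fold k in Hk.
  set (T := (ln (2 / r) + 1) / (a - b)).
  assert (Hln : 0 < ln (2 / r)).
  { rewrite <- ln_1. apply ln_increasing; [lra|]. apply (Rmult_lt_reg_r r); [lra|]. field_simplify; lra. }
  assert (HT : 0 < T) by (apply Rdiv_lt_0_compat; lra).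
  assert (HF : forall R, F lam nc gp gm cbar cB R = r * cosh_k k (a * R) - cosh_k k (b * R))
    by (intros; apply F_cosh_k).
  destruct (IVT (F lam nc gp gm cbar cB) 0 T) as [z [Hz Ez]]; [| exact HT | | |].
  - intros x. apply (continuity_pt_ext (fun R => r * cosh_k k (a * R) - cosh_k k (b * R)));
      [intros; symmetry; apply HF|].
    apply continuity_pt_minus; [apply continuity_pt_scal|]; apply continuity_pt_cosh_k.
  - rewrite HF, !Rmult_0_r, !cosh_k_0. lra.
  - rewrite HF.
    pose proof (cosh_k_le_exp k (b * T) ltac:(lra) ltac:(nra)).
    pose proof (cosh_k_ge_half_exp k (a * T) ltac:(lra) ltac:(nra)).
    assert (Hexp : exp (a * T) = exp (b * T) * (2 / r) * exp 1).
    { replace (a * T) with (b * T + ln (2 / r) + 1) by (unfold T; field; lra).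
      rewrite !exp_plus, exp_ln; [reflexivity|]. apply Rdiv_lt_0_compat; lra. }
    pose proof (exp_pos (b * T)). pose proof (exp_ineq1 1 ltac:(lra)).
    assert (r * (exp (a * T) / 2) = exp (b * T) * exp 1) by (rewrite Hexp; field; lra).
    assert (r * (exp (a * T) / 2) <= r * cosh_k k (a * T)) by (apply Rmult_le_compat_l; lra).
    assert (exp (b * T) * 2 < exp (b * T) * exp 1) by (apply Rmult_lt_compat_l; lra).
    lra.
  - exists z. split; [|exact Ez]. destruct (Req_dec z 0) as [->|]; [|lra].
    rewrite HF, !Rmult_0_r, !cosh_k_0 in Ez. lra.
Qed.

End FrontRatio.

Lemma derivable_pt_lim_affine u v x : derivable_pt_lim (fun t => u + v * t) x v.
Proof. apply is_derive_Reals. auto_derive; auto. ring. Qed.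

Lemma continuity_pt_affine u v x : continuity_pt (fun t => u + v * t) x.
Proof. eapply continuity_of_derivative, derivable_pt_lim_affine. Qed.

Lemma affine_of_derivative_except (D : list R) a b f k :
  a <= b -> (forall x, a <= x <= b -> continuity_pt f x) ->
  (forall x, a < x < b -> ~ In x D -> derivable_pt_lim f x k) -> f b = f a + k * (b - a).
Proof.
  intros Hab Hc Hd.
  assert (f a - k * a = f b - k * b); [|lra].
  apply (constant_of_derivative_except D a b (fun t => f t - k * t)); [exact Hab| |].
  - intros x Hx. apply continuity_pt_minus; [apply Hc, Hx|].
    apply (continuity_pt_ext (fun t => 0 + k * t)); [intros; ring| apply continuity_pt_affine].
  - intros x Hx Hn. rewrite <- (Rminus_diag k). apply derivable_pt_lim_minus; [apply Hd; auto|].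
    apply (derivable_pt_lim_ext (fun t => 0 + k * t)); [intros; ring| apply derivable_pt_lim_affine].
Qed.

Lemma affine_from_right_limit (D : list R) (Dom : R -> Prop) a b f k L :
  (forall x, a < x < b -> continuity_pt f x) ->
  (forall x, a < x < b -> ~ In x D -> derivable_pt_lim f x k) ->
  (forall x, a < x < b -> Dom x) -> limit1_in f Dom L a ->
  forall z, a < z < b -> f z = L + k * (z - a).
Proof.
  intros Hc Hd HDom Hlim z Hz.
  assert (Haff : forall w, a < w <= z -> f w = (f z - k * z) + k * w).
  { intros w Hw. rewrite (affine_of_derivative_except D w z f k); [ring| lra| |].
    - intros x Hx; apply Hc; lra.
    - intros x Hx Hn; apply Hd; auto; lra. }
  assert (HL : L = (f z - k * z) + k * a).
  { apply (limit1_value_by_agreement f (fun w => (f z - k * z) + k * w) Dom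
             (fun w => a < w < a + (z - a)) L a); [apply adhDa_right; lra| |exact Hlim|].
    - intros w Hw. split; [apply HDom; lra| apply Haff; lra].
    - apply continuity_pt_affine. }
  rewrite HL. ring.
Qed.

(* The pressure problem [-p'' = G(c)] on [[0, R]], where [G(c) = -gm] below the
   threshold point [xb] and [G(c) = gp] above it, with [p(0) = p(R) = 0],
   [p'(0+) = 0] and [p'(R-) = - sigma]: [p'] is piecewise affine, which yields
   the speed [sigma] and an algebraic equation for [xb]. *)
Section Pressure.

Variables gp gm sigma Rr xb : R.
Variables p dp : R -> R.
Variable D : list R.
Hypothesis Hxb : 0 <= xb < Rr.
Hypothesis Hp_cont : forall x, 0 <= x <= Rr -> continuity_pt p x.
Hypothesis Hp_deriv : forall x, 0 < x < Rr -> derivable_pt_lim p x (dp x).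
Hypothesis Hdp_cont : forall x, 0 < x < Rr -> continuity_pt dp x.
Hypothesis Hdp_below : forall x, 0 < x < xb -> ~ In x D -> derivable_pt_lim dp x gm.
Hypothesis Hdp_above : forall x, xb < x < Rr -> ~ In x D -> derivable_pt_lim dp x (- gp).
Hypothesis Hp_0 : p 0 = 0.
Hypothesis Hp_R : p Rr = 0.
Hypothesis Hdp_0 : limit1_in dp (fun x => 0 < x < Rr) 0 0.
Hypothesis Hdp_R : limit1_in dp (fun x => 0 < x < Rr) (- sigma) Rr.

Lemma dp_below_threshold z : 0 < z < xb -> dp z = gm * z.
Proof.
  intros Hz. rewrite (affine_from_right_limit D (fun x => 0 < x < Rr) 0 xb dp gm 0);
    [ring| intros; apply Hdp_cont; lra| exact Hdp_below| intros; lra| exact Hdp_0| exact Hz].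
Qed.

Lemma dp_limit_at_threshold : limit1_in dp (fun x => 0 < x < Rr) (gm * xb) xb.
Proof.
  destruct (Req_dec xb 0) as [->|Hxb0]; [rewrite Rmult_0_r; exact Hdp_0|].
  assert (Hval : dp xb = 0 + gm * xb).
  { apply (limit1_value_by_agreement dp (fun w => 0 + gm * w) (fun _ => True)
             (fun w => xb - xb < w < xb) (dp xb) xb); [apply adhDa_left; lra| | |].
    - intros w Hw. split; [exact I|]. rewrite dp_below_threshold; [ring| lra].
    - apply limit1_of_continuity, Hdp_cont; lra.
    - apply continuity_pt_affine. }
  rewrite Rplus_0_l in Hval. rewrite <- Hval. apply limit1_of_continuity, Hdp_cont; lra.
Qed.

Lemma dp_above_threshold z : xb < z < Rr -> dp z = gm * xb - gp * (z - xb).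
Proof.
  intros Hz. rewrite (affine_from_right_limit D (fun x => 0 < x < Rr) xb Rr dp (- gp) (gm * xb));
    [ring| intros; apply Hdp_cont; lra| exact Hdp_above| intros; lra|
     exact dp_limit_at_threshold| exact Hz].
Qed.

Lemma pressure_speed : sigma = gp * (Rr - xb) - gm * xb.
Proof.
  assert (- sigma = (gm * xb + gp * xb) + (- gp) * Rr); [|lra].
  apply (limit1_value_by_agreement dp (fun w => (gm * xb + gp * xb) + (- gp) * w)
           (fun x => 0 < x < Rr) (fun w => Rr - (Rr - xb) < w < Rr) (- sigma) Rr);
    [apply adhDa_left; lra| |exact Hdp_R| apply continuity_pt_affine].
  intros w Hw. split; [lra|]. rewrite dp_above_threshold; [ring| lra].
Qed.

Lemma pressure_at_threshold : p xb = gm * xb ^ 2 / 2.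
Proof.
  assert (Hconst : p 0 - gm * 0 ^ 2 / 2 = p xb - gm * xb ^ 2 / 2); [|rewrite Hp_0 in Hconst; lra].
  apply (constant_of_derivative_except nil 0 xb (fun t => p t - gm * t ^ 2 / 2)); [lra| |].
  - intros x Hx. apply continuity_pt_minus; [apply Hp_cont; lra|].
    apply derivable_continuous_pt. reg.
  - intros x Hx _. replace 0 with (dp x - gm * x) by (rewrite dp_below_threshold; lra).
    apply derivable_pt_lim_minus; [apply Hp_deriv; lra|].
    apply is_derive_Reals. auto_derive; auto. field.
Qed.

Lemma pressure_front_equation : (gp + gm) * (Rr - xb) ^ 2 = gm * Rr ^ 2.
Proof.
  set (q := fun t => gm * xb ^ 2 / 2 + gm * xb * (t - xb) - gp * (t - xb) ^ 2 / 2).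
  assert (Hconst : p xb - q xb = p Rr - q Rr).
  2: { unfold q in Hconst. rewrite Hp_R, pressure_at_threshold in Hconst. nra. }
  apply (constant_of_derivative_except nil xb Rr (fun t => p t - q t)); [lra| |].
  - intros x Hx. apply continuity_pt_minus; [apply Hp_cont; lra|].
    apply derivable_continuous_pt. unfold q. reg.
  - intros x Hx _. replace 0 with (dp x - (gm * xb - gp * (x - xb)))
      by (rewrite dp_above_threshold; lra).
    apply derivable_pt_lim_minus; [apply Hp_deriv; lra|].
    apply is_derive_Reals. unfold q. auto_derive; auto. field.
Qed.

End Pressure.

(* A bounded nondecreasing function on [(-oo, 0]] cannot carry an exponential
   mode [(f' - mu f) exp (mu x) = v] with [v < 0]: at [x = - M / (- v) - 1],
   [exp (mu x)] is so small that [f'(x) < 0]. *)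
Lemma no_negative_mode f df mu v M :
  0 < mu -> v < 0 ->
  (forall x, x < 0 -> 0 <= df x) ->
  (forall x, x <= 0 -> 0 <= f x <= M) ->
  (forall x, x < 0 -> (df x - mu * f x) * exp (mu * x) = v) -> False.
Proof.
  intros Hmu Hv Hdpos Hbnd Hmode.
  assert (HM : 0 <= M) by (pose proof (Hbnd 0 ltac:(lra)); lra).
  set (t := M / - v). assert (Ht : t * - v = M) by (unfold t; field; lra).
  assert (Ht0 : 0 <= t) by (unfold t; apply Rdiv_le_0_compat; lra).
  set (x := - t - 1). assert (Hx : x < 0) by (unfold x; lra).
  pose proof (exp_pos (mu * x)) as HE0.
  assert (Hinv : exp (mu * x) * exp (- (mu * x)) = 1)
    by (rewrite <- exp_plus, Rplus_opp_r; apply exp_0).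
  pose proof (exp_ineq1_le (- (mu * x))) as Hlow.
  assert (Hdecay : exp (mu * x) * (1 + mu * t) <= 1) by (unfold x in *; nra).
  pose proof (Hmode x Hx) as Hmode_x. pose proof (Hdpos x Hx) as Hdf_x.
  pose proof (Hbnd x ltac:(lra)) as Hf_x.
  assert (Hslope : 0 <= df x * exp (mu * x)) by nra.
  assert (Hbound : mu * f x * exp (mu * x) <= mu * M * exp (mu * x))
    by (apply Rmult_le_compat_r; [lra| apply Rmult_le_compat_l; lra]).
  assert (Hgrow : - v * 1 <= - v * (mu * t * exp (mu * x))) by (rewrite <- Ht in Hbound; nra).
  apply Rmult_le_reg_l in Hgrow; nra.
Qed.

(* Nor with [v > 0]: then [f' >= v] on [(-oo, 0)], so [f] drops by more than
   [M] over an interval of length [(M + 1) / v]. *)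
Lemma no_positive_mode f df mu v M :
  0 < mu -> 0 < v ->
  (forall x, x <= 0 -> continuity_pt f x) ->
  (forall x, x < 0 -> derivable_pt_lim f x (df x)) ->
  (forall x, x < 0 -> 0 <= df x) ->
  (forall x, x <= 0 -> 0 <= f x <= M) ->
  (forall x, x < 0 -> (df x - mu * f x) * exp (mu * x) = v) -> False.
Proof.
  intros Hmu Hv Hc Hd Hdpos Hbnd Hmode.
  assert (Hslope : forall x, x < 0 -> v <= df x).
  { intros x Hx. pose proof (Hmode x Hx). pose proof (exp_pos (mu * x)).
    pose proof (exp_lt_1 (mu * x) ltac:(nra)). pose proof (Hdpos x Hx).
    pose proof (Hbnd x ltac:(lra)).
    assert (0 <= mu * f x * exp (mu * x)) by (apply Rmult_le_pos; nra).
    assert (df x * exp (mu * x) <= df x * 1) by (apply Rmult_le_compat_l; lra).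
    nra. }
  assert (HM : 0 <= M) by (pose proof (Hbnd 0 ltac:(lra)); lra).
  set (x0 := - ((M + 1) / v)).
  assert (Hx0 : x0 < 0) by (unfold x0; pose proof (Rdiv_lt_0_compat (M + 1) v); lra).
  assert (Hdrop : f x0 - v * x0 <= f 0 - v * 0).
  { apply (nondecreasing_of_derivative x0 0 (fun t => f t - v * t) (fun t => df t - v * 1));
      [lra| |].
    - intros x Hx. apply continuity_pt_minus; [apply Hc; lra|].
      apply continuity_pt_scal, derivable_continuous_pt, derivable_pt_id.
    - intros x Hx. split; [|pose proof (Hslope x ltac:(lra)); lra].
      apply derivable_pt_lim_minus; [apply Hd; lra|].
      apply derivable_pt_lim_scal, derivable_pt_lim_id. }
  assert (v * x0 = - (M + 1)) by (unfold x0; field; lra).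
  pose proof (Hbnd x0 ltac:(lra)). pose proof (Hbnd 0 ltac:(lra)). lra.
Qed.

Lemma bounded_no_growing_mode f df mu v M :
  0 < mu ->
  (forall x, x <= 0 -> continuity_pt f x) ->
  (forall x, x < 0 -> derivable_pt_lim f x (df x)) ->
  (forall x, x < 0 -> 0 <= df x) ->
  (forall x, x <= 0 -> 0 <= f x <= M) ->
  (forall x, x < 0 -> (df x - mu * f x) * exp (mu * x) = v) -> v = 0.
Proof.
  intros Hmu Hc Hd Hdpos Hbnd Hmode.
  destruct (Rtotal_order v 0) as [Hv|[Hv|Hv]]; [exfalso| exact Hv| exfalso].
  - exact (no_negative_mode f df mu v M Hmu Hv Hdpos Hbnd Hmode).
  - exact (no_positive_mode f df mu v M Hmu Hv Hc Hd Hdpos Hbnd Hmode).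
Qed.

Section NecessaryConditions.

Variables lam nc gp gm cbar cB sigma Rr : R.
Variables n c p dc dp : R -> R.
Variable D : list R.
Hypotheses (Hlam : 0 < lam) (Hnc : 0 < nc) (Hgp : 0 < gp) (Hgm : 0 < gm).
Hypotheses (Hcbar : 0 < cbar) (HcB : cbar < cB) (Hsigma : 0 < sigma) (HRr : 0 < Rr).
Hypothesis Hn_range : forall x, 0 <= n x <= 1.
Hypothesis Hc_nonneg : forall x, 0 <= c x.
Hypothesis Hn_cont : forall x, x <= 0 -> continuity_pt n x.
Hypothesis Hn_deriv : forall x, x < 0 -> ~ In x D ->
  derivable_pt_lim n x (- (n x * G gp gm cbar (c x)) / sigma).
Hypothesis Hn_core : forall x, 0 <= x <= Rr -> n x = 1.
Hypothesis Hc_cont : forall x, x <= Rr -> continuity_pt c x.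
Hypothesis Hc_deriv : forall x, x < Rr -> derivable_pt_lim c x (dc x).
Hypothesis Hdc_cont : forall x, x < Rr -> continuity_pt dc x.
Hypothesis Hdc_deriv : forall x, x < Rr -> ~ In x D ->
  derivable_pt_lim dc x (psi lam nc (n x) * c x).
Hypothesis Hc_R : c Rr = cB.
Hypothesis Hc_bounded : exists M, forall x, x <= 0 -> Rabs (c x) <= M.
Hypothesis Hdc_nonneg : forall x, x < Rr -> 0 <= dc x.
Hypothesis Hp_cont : forall x, 0 <= x <= Rr -> continuity_pt p x.
Hypothesis Hp_deriv : forall x, 0 < x < Rr -> derivable_pt_lim p x (dp x).
Hypothesis Hdp_cont : forall x, 0 < x < Rr -> continuity_pt dp x.
Hypothesis Hdp_deriv : forall x, 0 < x < Rr -> ~ In x D ->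
  derivable_pt_lim dp x (- G gp gm cbar (c x)).
Hypothesis Hp_0 : p 0 = 0.
Hypothesis Hp_R : p Rr = 0.
Hypothesis Hdp_R : limit1_in dp (fun x => 0 < x < Rr) (- sigma) Rr.
Hypothesis Hdp_0 : limit1_in dp (fun x => 0 < x < Rr) 0 0.

(* At the rear of the proliferating zone the nutrient is below threshold:
   otherwise [G = gp] just left of 0 and [n] would decay forward from a value
   above [n(0) = 1]. *)
Lemma c_origin_le_threshold : c 0 <= cbar.
Proof.
  destruct (Rle_dec (c 0) cbar) as [|Hgt]; [assumption| exfalso].
  destruct (continuity_pt_lower_bound c 0 cbar (Hc_cont 0 ltac:(lra)) ltac:(lra))
    as [d [Hd Hnear]].
  assert (Hode : n (- d / 2) * exp (- (- gp / sigma) * (- d / 2))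
                 = n 0 * exp (- (- gp / sigma) * 0)).
  { apply (linear_ode_except D); [lra| intros; apply Hn_cont; lra|].
    intros x Hx Hnx.
    replace (- gp / sigma * n x) with (- (n x * G gp gm cbar (c x)) / sigma)
      by (rewrite G_above; [field; lra| apply Hnear, Rabs_def1; lra]).
    apply Hn_deriv; [lra| exact Hnx]. }
  rewrite (Hn_core 0), Rmult_0_r, exp_0, Rmult_1_r in Hode by lra.
  assert (Hdecay : exp (- (- gp / sigma) * (- d / 2)) < 1).
  { apply exp_lt_1. pose proof (Rdiv_lt_0_compat gp sigma Hgp Hsigma). nra. }
  pose proof (Hn_range (- d / 2)). pose proof (exp_pos (- (- gp / sigma) * (- d / 2))). nra.
Qed.

Lemma c_nondecreasing x y : x <= y < Rr -> c x <= c y.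
Proof.
  intros Hxy. apply (nondecreasing_of_derivative x y c dc); [lra| intros; apply Hc_cont; lra|].
  intros z Hz. split; [apply Hc_deriv| apply Hdc_nonneg]; lra.
Qed.

(* Behind the front the nutrient stays strictly below threshold: otherwise [c]
   would equal [cbar] on an interval where [n = 1], so [c'' = lam cbar > 0]
   would contradict [c' = 0]. *)
Lemma c_below_threshold_left x : x < 0 -> c x < cbar.
Proof.
  intros Hx. destruct (Rlt_dec (c x) cbar) as [|Hge]; [assumption| exfalso].
  pose proof c_origin_le_threshold.
  assert (Hflat : forall z, x < z < 0 -> c z = cbar).
  { intros z Hz. pose proof (c_nondecreasing x z ltac:(lra)).
    pose proof (c_nondecreasing z 0 ltac:(lra)). lra. }
  destruct (exists_not_in D x 0 Hx) as [y [Hy Hny]].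
  assert (Hny1 : n y = 1).
  { assert (Hode : n y * exp (- 0 * y) = n 0 * exp (- 0 * 0)).
    { apply (linear_ode_except D); [lra| intros; apply Hn_cont; lra|].
      intros z Hz Hnz. replace (0 * n z) with (- (n z * G gp gm cbar (c z)) / sigma)
        by (rewrite Hflat, G_threshold by lra; field; lra).
      apply Hn_deriv; [lra| exact Hnz]. }
    rewrite (Hn_core 0), !Rmult_0_r, Ropp_0, Rmult_0_l, exp_0, !Rmult_1_r in Hode by lra.
    exact Hode. }
  assert (Hdc0 : forall z, x < z < 0 -> dc z = 0).
  { intros z Hz. apply (uniqueness_limite c z); [apply Hc_deriv; lra|].
    apply (derivable_pt_lim_locally_ext (fun _ => cbar) c z x 0); [lra| |apply derivable_pt_lim_const].
    intros w Hw. symmetry. apply Hflat, Hw. }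
  assert (Hdc_flat : derivable_pt_lim dc y 0).
  { apply (derivable_pt_lim_locally_ext (fun _ => 0) dc y x 0); [lra| |apply derivable_pt_lim_const].
    intros w Hw. symmetry. apply Hdc0, Hw. }
  pose proof (uniqueness_limite dc y _ _ Hdc_flat (Hdc_deriv y ltac:(lra) Hny)) as Hzero.
  rewrite Hny1, psi_one, Hflat in Hzero by lra. nra.
Qed.

(* Hence [G = - gm] behind the front, and [n] is the exponential [exp (gm x / sigma)]. *)
Lemma n_left_profile x : x <= 0 -> n x = exp (gm / sigma * x).
Proof.
  intros Hx.
  assert (Hode : n x * exp (- (gm / sigma) * x) = n 0 * exp (- (gm / sigma) * 0)).
  { apply (linear_ode_except D); [lra| intros; apply Hn_cont; lra|].
    intros z Hz Hnz. replace (gm / sigma * n z) with (- (n z * G gp gm cbar (c z)) / sigma)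
      by (rewrite G_below by (apply c_below_threshold_left; lra); field; lra).
    apply Hn_deriv; [lra| exact Hnz]. }
  rewrite (Hn_core 0), Rmult_0_r, exp_0, Rmult_1_r in Hode by lra.
  replace (- (gm / sigma) * x) with (- (gm / sigma * x)) in Hode by ring.
  rewrite exp_Ropp in Hode. pose proof (exp_pos (gm / sigma * x)).
  apply (Rmult_eq_reg_r (/ exp (gm / sigma * x))); [rewrite Hode; field; lra|].
  apply Rinv_neq_0_compat; lra.
Qed.

Lemma c_left_mode x : x < 0 ->
  (dc x - sqrt lam * sqrt nc * c x) * exp (sqrt lam * sqrt nc * x)
  = dc 0 - sqrt lam * sqrt nc * c 0.
Proof.
  intros Hx. set (mu := sqrt lam * sqrt nc).
  assert (Hmode : (dc x - mu * c x) * exp (mu * x) = (dc 0 - mu * c 0) * exp (mu * 0)).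
  2: { rewrite Rmult_0_r, exp_0, Rmult_1_r in Hmode. exact Hmode. }
  apply (second_order_combination D); [lra| intros; apply Hc_cont; lra|
                                       intros; apply Hdc_cont; lra| intros; apply Hc_deriv; lra|].
  intros z Hz Hnz. replace (mu * mu * c z) with (psi lam nc (n z) * c z).
  - apply Hdc_deriv; [lra| exact Hnz].
  - rewrite psi_partial.
    + unfold mu. replace (sqrt lam * sqrt nc * (sqrt lam * sqrt nc))
        with ((sqrt lam * sqrt lam) * (sqrt nc * sqrt nc)) by ring.
      rewrite !sqrt_sqrt; lra.
    + rewrite n_left_profile by lra. split; [apply exp_pos| apply exp_lt_1].
      pose proof (Rdiv_lt_0_compat gm sigma Hgm Hsigma). nra.
Qed.

(* Boundedness of [c] kills the mode: [c'(0) = mu c(0)]. *)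
Lemma dc_origin : dc 0 = sqrt lam * sqrt nc * c 0.
Proof.
  destruct Hc_bounded as [M HM].
  assert (Hmu : 0 < sqrt lam * sqrt nc)
    by (apply Rmult_lt_0_compat; apply sqrt_lt_R0; assumption).
  assert (dc 0 - sqrt lam * sqrt nc * c 0 = 0); [|lra].
  apply (bounded_no_growing_mode c dc (sqrt lam * sqrt nc) _ M Hmu);
    [intros; apply Hc_cont; lra| intros; apply Hc_deriv; lra| intros; apply Hdc_nonneg; lra| |
     exact c_left_mode].
  intros x Hx. pose proof (HM x Hx). pose proof (Hc_nonneg x).
  rewrite Rabs_right in H by lra. lra.
Qed.

(* In the proliferating zone [c'' = lam c] with [c'(0) = mu c(0)], so
   [c = c(0) cosh_k (sqrt nc) (sqrt lam x)] on [[0, R]]. *)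
Lemma c_core_profile y : 0 <= y <= Rr -> c y = c 0 * cosh_k (sqrt nc) (sqrt lam * y).
Proof.
  assert (Hopen : forall y, 0 <= y < Rr -> c y = c 0 * cosh_k (sqrt nc) (sqrt lam * y)).
  { intros z Hz. apply (cosh_k_solution D z c dc); [apply sqrt_lt_R0, Hlam| lra|
      intros; apply Hc_cont; lra| intros; apply Hdc_cont; lra| intros; apply Hc_deriv; lra| |
      rewrite dc_origin; ring].
    intros x Hx Hnx. rewrite sqrt_sqrt by lra.
    replace (lam * c x) with (psi lam nc (n x) * c x) by (rewrite Hn_core, psi_one by lra; reflexivity).
    apply Hdc_deriv; [lra| exact Hnx]. }
  intros Hy. destruct (Rlt_dec y Rr) as [Hlt|Hge]; [apply Hopen; lra|].
  replace y with Rr by lra.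
  apply (limit1_value_by_agreement c (fun t => c 0 * cosh_k (sqrt nc) (sqrt lam * t))
           (fun _ => True) (fun t => Rr - Rr < t < Rr) (c Rr) Rr); [apply adhDa_left; lra| | |].
  - intros t Ht. split; [exact I| apply Hopen; lra].
  - apply limit1_of_continuity, Hc_cont; lra.
  - apply continuity_pt_scal, continuity_pt_cosh_k.
Qed.

(* In particular [c(0) > 0], since [c(R) = cB > 0]. *)
Lemma c_origin_pos : 0 < c 0.
Proof.
  pose proof (c_core_profile Rr ltac:(lra)) as HcR.
  destruct (Hc_nonneg 0) as [|Hz]; [assumption|]. rewrite <- Hz in HcR. lra.
Qed.

(* Inside the proliferating zone [c] is increasing, from [c(0) <= cbar] to
   [c(R) = cB > cbar]: it crosses the threshold at a single point [xb]. *)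
Lemma threshold_point : exists xb, 0 <= xb < Rr /\ c xb = cbar /\
  (forall y, 0 < y < xb -> c y < cbar) /\ (forall y, xb < y < Rr -> cbar < c y).
Proof.
  set (h := fun y => c 0 * cosh_k (sqrt nc) (sqrt lam * y) - cbar).
  pose proof c_origin_le_threshold. pose proof (c_core_profile Rr ltac:(lra)) as HcR.
  pose proof c_origin_pos as Hc0.
  assert (Hk : 0 < sqrt nc) by (apply sqrt_lt_R0, Hnc).
  assert (Ha : 0 < sqrt lam) by (apply sqrt_lt_R0, Hlam).
  destruct (IVT_cor h 0 Rr) as [xb [Hxb Hh]]; [| lra| |].
  - intros x. apply continuity_pt_minus; [apply continuity_pt_scal, continuity_pt_cosh_k|].
    apply continuity_pt_const. intros u v. reflexivity.
  - unfold h. rewrite Rmult_0_r, cosh_k_0, <- HcR. nra.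
  - unfold h in Hh.
    assert (Hxb_R : xb <> Rr) by (intros ->; lra).
    exists xb. split; [lra|]. split; [rewrite c_core_profile; lra|].
    split; intros y Hy; rewrite c_core_profile by lra.
    + assert (cosh_k (sqrt nc) (sqrt lam * y) < cosh_k (sqrt nc) (sqrt lam * xb))
        by (apply cosh_k_lt; [lra| split; nra]).
      nra.
    + assert (cosh_k (sqrt nc) (sqrt lam * xb) < cosh_k (sqrt nc) (sqrt lam * y))
        by (apply cosh_k_lt; [lra| split; nra]).
      nra.
Qed.

(* The pressure analysis at the threshold point [xb] gives the speed and
   [R - xb = alpha R]; then [F R = c(xb) / c(R) cosh_k (a R) - cosh_k (a xb) = 0]. *)
Lemma necessary_conditions :
  F lam nc gp gm cbar cB Rr = 0 /\ sigma = Rr * (sqrt ((gp + gm) * gm) - gm).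
Proof.
  destruct threshold_point as [xb [Hxb [Hcxb [Hbelow Habove]]]].
  assert (Hdp_below : forall x, 0 < x < xb -> ~ In x D -> derivable_pt_lim dp x gm).
  { intros x Hx Hnx. replace gm with (- G gp gm cbar (c x))
      by (rewrite G_below by (apply Hbelow; lra); ring).
    apply Hdp_deriv; [lra| exact Hnx]. }
  assert (Hdp_above : forall x, xb < x < Rr -> ~ In x D -> derivable_pt_lim dp x (- gp)).
  { intros x Hx Hnx. rewrite <- (G_above gp gm cbar (c x)) by (apply Habove; lra).
    apply Hdp_deriv; [lra| exact Hnx]. }
  assert (Hfront : (gp + gm) * (Rr - xb) ^ 2 = gm * Rr ^ 2)
    by (apply (pressure_front_equation gp gm Rr xb p dp D); assumption).
  assert (Hspeed : sigma = gp * (Rr - xb) - gm * xb)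
    by (apply (pressure_speed gp gm sigma Rr xb dp D); assumption).
  pose proof (front_equation_solution gp gm Rr xb Hgp Hgm ltac:(lra) Hfront) as Hxb_front.
  split.
  - rewrite F_cosh_k.
    replace (sqrt lam * (1 - alpha gp gm) * Rr) with (sqrt lam * xb)
      by (replace xb with (Rr - alpha gp gm * Rr) by lra; ring).
    rewrite <- Hcxb, <- Hc_R, (c_core_profile xb), (c_core_profile Rr) by lra.
    pose proof c_origin_pos.
    assert (HaR : 0 <= sqrt lam * Rr) by (apply Rmult_le_pos; [apply sqrt_pos| lra]).
    pose proof (cosh_k_ge_1 (sqrt nc) (sqrt lam * Rr) (sqrt_lt_R0 nc Hnc) HaR).
    field. split; lra.
  - rewrite Hspeed, sqrt_speed_alpha by assumption.
    replace xb with (Rr - alpha gp gm * Rr) by lra. ring.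
Qed.

End NecessaryConditions.

Section Construction.

Variables lam nc gp gm cbar cB Rr : R.
Hypotheses (Hlam : 0 < lam) (Hnc : 0 < nc) (Hnc1 : nc < 1) (Hgp : 0 < gp) (Hgm : 0 < gm).
Hypotheses (Hcbar : 0 < cbar) (HcB : cbar < cB) (HRr : 0 < Rr).
Hypothesis Hroot : F lam nc gp gm cbar cB Rr = 0.

Let a := sqrt lam.
Let k := sqrt nc.
Let mu := a * k.
Let speed := Rr * (sqrt ((gp + gm) * gm) - gm).
(* The threshold point, where the nutrient crosses [cbar]. *)
Let xb := (1 - alpha gp gm) * Rr.
(* The nutrient level at the rear of the proliferating zone. *)
Let c0 := cB / cosh_k k (a * Rr).

Definition n_wave (x : R) : R :=
  if Rle_dec x 0 then exp (gm / speed * x) else if Rle_dec x Rr then 1 else 0.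
Definition c_wave (x : R) : R :=
  if Rlt_dec x 0 then c0 * exp (mu * x) else if Rle_dec x Rr then c0 * cosh_k k (a * x) else cB.
Definition dc_wave (x : R) : R :=
  if Rlt_dec x 0 then c0 * (mu * exp (mu * x)) else c0 * (a * sinh_k k (a * x)).
Definition p_wave (x : R) : R :=
  if Rlt_dec x 0 then 0 else if Rle_dec x xb then gm * x ^ 2 / 2
  else if Rle_dec x Rr then gm * xb ^ 2 / 2 + gm * xb * (x - xb) - gp * (x - xb) ^ 2 / 2
  else 0.
Definition dp_wave (x : R) : R :=
  if Rle_dec x xb then gm * x else gm * xb - gp * (x - xb).

Ltac split_cases :=
  unfold n_wave, c_wave, dc_wave, p_wave, dp_wave;
  repeat match goal with
         | |- context [Rle_dec ?u ?v] => destruct (Rle_dec u v)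
         | |- context [Rlt_dec ?u ?v] => destruct (Rlt_dec u v)
         end; try lra.

Lemma a_pos : 0 < a.
Proof. apply sqrt_lt_R0, Hlam. Qed.

Lemma k_bounds : 0 < k < 1.
Proof. apply sqrt_nc_bounds; assumption. Qed.

Lemma mu_pos : 0 < mu.
Proof. pose proof a_pos. pose proof k_bounds. unfold mu. nra. Qed.

Lemma mu_square : mu * mu = lam * nc.
Proof.
  unfold mu, a, k. replace (sqrt lam * sqrt nc * (sqrt lam * sqrt nc))
    with ((sqrt lam * sqrt lam) * (sqrt nc * sqrt nc)) by ring.
  rewrite !sqrt_sqrt; lra.
Qed.

Lemma xb_bounds : 0 < xb < Rr.
Proof. pose proof (alpha_bounds gp gm Hgp Hgm). unfold xb. split; nra. Qed.

Lemma speed_pos : 0 < speed.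
Proof. apply Rmult_lt_0_compat; [exact HRr| apply speed_constant_pos; assumption]. Qed.

Lemma speed_balance : speed = gp * (Rr - xb) - gm * xb.
Proof. unfold speed, xb. rewrite sqrt_speed_alpha by assumption. ring. Qed.

(* The pressure vanishes again at the front. *)
Lemma front_balance : gm * xb ^ 2 / 2 + gm * xb * (Rr - xb) - gp * (Rr - xb) ^ 2 / 2 = 0.
Proof.
  pose proof (alpha_square gp gm Hgp Hgm).
  replace (gm * xb ^ 2 / 2 + gm * xb * (Rr - xb) - gp * (Rr - xb) ^ 2 / 2)
    with ((gm - (gp + gm) * alpha gp gm ^ 2) * Rr ^ 2 / 2) by (unfold xb; field).
  rewrite H. field.
Qed.

Lemma cosh_k_wave_pos y : 0 <= y -> 0 < cosh_k k y.
Proof. intros Hy. pose proof (cosh_k_ge_1 k y (proj1 k_bounds) Hy). lra. Qed.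

Lemma c0_at_front : c0 * cosh_k k (a * Rr) = cB.
Proof.
  unfold c0. pose proof (cosh_k_wave_pos (a * Rr) ltac:(pose proof a_pos; nra)). field. lra.
Qed.

(* [F R = 0] places the threshold crossing exactly at [xb]. *)
Lemma c0_at_threshold : c0 * cosh_k k (a * xb) = cbar.
Proof.
  rewrite F_cosh_k in Hroot. fold a k in Hroot.
  replace (a * (1 - alpha gp gm) * Rr) with (a * xb) in Hroot by (unfold xb; field).
  pose proof (cosh_k_wave_pos (a * Rr) ltac:(pose proof a_pos; nra)).
  unfold c0. replace (cosh_k k (a * xb)) with (cbar / cB * cosh_k k (a * Rr)) by lra.
  field. split; lra.
Qed.

Lemma c0_pos : 0 < c0.
Proof.
  unfold c0. apply Rdiv_lt_0_compat; [lra|].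
  apply cosh_k_wave_pos. pose proof a_pos. nra.
Qed.

Lemma gm_speed_pos : 0 < gm / speed.
Proof. apply Rdiv_lt_0_compat; [exact Hgm| exact speed_pos]. Qed.

Lemma n_wave_range x : 0 <= n_wave x <= 1.
Proof.
  pose proof gm_speed_pos. split_cases.
  split; [left; apply exp_pos| apply exp_le_1; nra].
Qed.

Lemma n_wave_left x : x < 0 -> 0 < n_wave x < 1.
Proof.
  intros Hx. pose proof gm_speed_pos. split_cases.
  split; [apply exp_pos| apply exp_lt_1; nra].
Qed.

Lemma n_wave_cont x : x <= 0 -> continuity_pt n_wave x.
Proof.
  intros Hx. destruct (Rlt_dec x 0) as [Hlt|Hge].
  - apply (continuity_pt_interval_ext _ (fun t => exp (gm / speed * t)) x (x - 1) 0);
      [lra| intros; split_cases| eapply continuity_of_derivative, derivable_pt_lim_exp_lin].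
  - replace x with 0 by lra.
    apply (continuity_pt_glue _ (fun t => exp (gm / speed * t)) (fun _ => 1) 0 Rr); [lra| | | |].
    + intros z Hz. split_cases.
    + intros z Hz. split_cases. replace z with 0 by lra. rewrite Rmult_0_r, exp_0. reflexivity.
    + eapply continuity_of_derivative, derivable_pt_lim_exp_lin.
    + apply continuity_pt_const. intros u v. reflexivity.
Qed.

Lemma n_wave_deriv x : x < 0 -> derivable_pt_lim n_wave x (gm / speed * n_wave x).
Proof.
  intros Hx. replace (n_wave x) with (exp (gm / speed * x)) by split_cases.
  apply (derivable_pt_lim_locally_ext (fun t => exp (gm / speed * t)) _ x (x - 1) 0);
    [lra| intros; split_cases| apply derivable_pt_lim_exp_lin].
Qed.

Lemma n_wave_core x : 0 <= x <= Rr -> n_wave x = 1.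
Proof. intros Hx. split_cases. replace x with 0 by lra. rewrite Rmult_0_r. apply exp_0. Qed.

Lemma n_wave_beyond x : Rr < x -> n_wave x = 0.
Proof. intros Hx. split_cases. Qed.

(* The nutrient: [c0 exp (mu x)] behind, [c0 cosh_k k (a x)] inside, [cB] beyond;
   the two inner pieces match to first order at 0 since [mu = a k]. *)
Lemma c_wave_matching_value : c0 * cosh_k k (a * 0) = c0 * exp (mu * 0).
Proof. rewrite !Rmult_0_r, exp_0, cosh_k_0. reflexivity. Qed.

Lemma c_wave_matching_slope : c0 * (a * sinh_k k (a * 0)) = c0 * (mu * exp (mu * 0)).
Proof. rewrite !Rmult_0_r, exp_0, sinh_k_0. unfold mu. ring. Qed.

Lemma derivable_pt_lim_c_left x :
  derivable_pt_lim (fun t => c0 * exp (mu * t)) x (c0 * (mu * exp (mu * x))).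
Proof. apply derivable_pt_lim_scal, derivable_pt_lim_exp_lin. Qed.

Lemma derivable_pt_lim_c_core x :
  derivable_pt_lim (fun t => c0 * cosh_k k (a * t)) x (c0 * (a * sinh_k k (a * x))).
Proof. apply derivable_pt_lim_scal, derivable_pt_lim_cosh_k. Qed.

Lemma derivable_pt_lim_dc_left x :
  derivable_pt_lim (fun t => c0 * (mu * exp (mu * t))) x (mu * mu * (c0 * exp (mu * x))).
Proof.
  replace (mu * mu * (c0 * exp (mu * x))) with (c0 * (mu * (mu * exp (mu * x)))) by ring.
  apply derivable_pt_lim_scal, derivable_pt_lim_scal, derivable_pt_lim_exp_lin.
Qed.

Lemma derivable_pt_lim_dc_core x :
  derivable_pt_lim (fun t => c0 * (a * sinh_k k (a * t))) x (a * a * (c0 * cosh_k k (a * x))).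
Proof.
  replace (a * a * (c0 * cosh_k k (a * x))) with (c0 * (a * (a * cosh_k k (a * x)))) by ring.
  apply derivable_pt_lim_scal, derivable_pt_lim_scal, derivable_pt_lim_sinh_k.
Qed.

Lemma c_wave_deriv x : x < Rr -> derivable_pt_lim c_wave x (dc_wave x).
Proof.
  intros Hx. destruct (Rtotal_order x 0) as [Hlt|[->|Hgt]].
  - replace (dc_wave x) with (c0 * (mu * exp (mu * x))) by split_cases.
    apply (derivable_pt_lim_locally_ext (fun t => c0 * exp (mu * t)) _ x (x - 1) 0);
      [lra| intros; split_cases| apply derivable_pt_lim_c_left].
  - replace (dc_wave 0) with (c0 * (a * sinh_k k (a * 0))) by split_cases.
    apply (derivable_pt_lim_glue _ (fun t => c0 * exp (mu * t)) (fun t => c0 * cosh_k k (a * t)) 0 Rr);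
      [lra| | | |apply derivable_pt_lim_c_core].
    + intros z Hz. split_cases. replace z with 0 by lra. apply c_wave_matching_value.
    + intros z Hz. split_cases.
    + rewrite c_wave_matching_slope. apply derivable_pt_lim_c_left.
  - replace (dc_wave x) with (c0 * (a * sinh_k k (a * x))) by split_cases.
    apply (derivable_pt_lim_locally_ext (fun t => c0 * cosh_k k (a * t)) _ x 0 Rr);
      [lra| intros; split_cases| apply derivable_pt_lim_c_core].
Qed.

Lemma c_wave_cont x : x <= Rr -> continuity_pt c_wave x.
Proof.
  intros Hx. destruct (Rlt_dec x Rr) as [Hlt|Hge].
  - eapply continuity_of_derivative, c_wave_deriv, Hlt.
  - replace x with Rr by lra.
    apply (continuity_pt_glue _ (fun t => c0 * cosh_k k (a * t)) (fun _ => cB) Rr Rr); [lra| | | |].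
    + intros z Hz. split_cases.
    + intros z Hz. split_cases. replace z with Rr by lra. apply c0_at_front.
    + apply continuity_pt_scal, continuity_pt_cosh_k.
    + apply continuity_pt_const. intros u v. reflexivity.
Qed.

Lemma dc_wave_deriv_left x : x < 0 -> derivable_pt_lim dc_wave x (mu * mu * c_wave x).
Proof.
  intros Hx. replace (c_wave x) with (c0 * exp (mu * x)) by split_cases.
  apply (derivable_pt_lim_locally_ext (fun t => c0 * (mu * exp (mu * t))) _ x (x - 1) 0);
    [lra| intros; split_cases| apply derivable_pt_lim_dc_left].
Qed.

Lemma dc_wave_deriv_core x : 0 < x < Rr -> derivable_pt_lim dc_wave x (a * a * c_wave x).
Proof.
  intros Hx. replace (c_wave x) with (c0 * cosh_k k (a * x)) by split_cases.
  apply (derivable_pt_lim_locally_ext (fun t => c0 * (a * sinh_k k (a * t))) _ x 0 Rr);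
    [lra| intros; split_cases| apply derivable_pt_lim_dc_core].
Qed.

Lemma dc_wave_cont x : continuity_pt dc_wave x.
Proof.
  destruct (Rtotal_order x 0) as [Hlt|[->|Hgt]].
  - eapply continuity_of_derivative, dc_wave_deriv_left, Hlt.
  - apply (continuity_pt_glue _ (fun t => c0 * (mu * exp (mu * t)))
             (fun t => c0 * (a * sinh_k k (a * t))) 0 1); [lra| | | |].
    + intros z Hz. split_cases. replace z with 0 by lra. apply c_wave_matching_slope.
    + intros z Hz. split_cases.
    + eapply continuity_of_derivative, derivable_pt_lim_dc_left.
    + eapply continuity_of_derivative, derivable_pt_lim_dc_core.
  - apply (continuity_pt_interval_ext _ (fun t => c0 * (a * sinh_k k (a * t))) x 0 (x + 1));
      [lra| intros; split_cases| eapply continuity_of_derivative, derivable_pt_lim_dc_core].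
Qed.

Lemma dc_wave_nonneg x : 0 <= dc_wave x.
Proof.
  pose proof c0_pos. pose proof mu_pos. pose proof a_pos. pose proof k_bounds. split_cases.
  - pose proof (exp_pos (mu * x)). apply Rmult_le_pos; [lra| apply Rmult_le_pos; lra].
  - pose proof (sinh_k_pos k (a * x) ltac:(lra) ltac:(nra)).
    apply Rmult_le_pos; [lra| apply Rmult_le_pos; lra].
Qed.

Lemma c_wave_nonneg x : 0 <= c_wave x.
Proof.
  pose proof c0_pos. pose proof a_pos. split_cases.
  - pose proof (exp_pos (mu * x)). nra.
  - pose proof (cosh_k_wave_pos (a * x) ltac:(nra)). nra.
Qed.

Lemma c_wave_bounded x : x <= 0 -> Rabs (c_wave x) <= c0.
Proof.
  intros Hx. pose proof c0_pos. pose proof mu_pos. rewrite Rabs_right by (apply Rle_ge, c_wave_nonneg).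
  split_cases.
  - pose proof (exp_le_1 (mu * x) ltac:(nra)). nra.
  - replace x with 0 by lra. rewrite Rmult_0_r, cosh_k_0. lra.
Qed.

Lemma c_wave_front : c_wave Rr = cB.
Proof. split_cases. apply c0_at_front. Qed.

Lemma c_wave_beyond x : Rr < x -> c_wave x = cB.
Proof. intros Hx. split_cases. Qed.

Lemma c_wave_below x : x < xb -> c_wave x < cbar.
Proof.
  intros Hx. pose proof c0_pos. pose proof mu_pos. pose proof a_pos. pose proof k_bounds.
  pose proof xb_bounds. rewrite <- c0_at_threshold. split_cases.
  - pose proof (exp_lt_1 (mu * x) ltac:(nra)).
    pose proof (cosh_k_ge_1 k (a * xb) ltac:(lra) ltac:(nra)). nra.
  - apply Rmult_lt_compat_l; [lra|]. apply cosh_k_lt; [lra| split; nra].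
Qed.

Lemma c_wave_above x : xb < x <= Rr -> cbar < c_wave x.
Proof.
  intros Hx. pose proof c0_pos. pose proof a_pos. pose proof k_bounds. pose proof xb_bounds.
  rewrite <- c0_at_threshold. split_cases.
  apply Rmult_lt_compat_l; [lra|]. apply cosh_k_lt; [lra| split; nra].
Qed.

Lemma derivable_pt_lim_p_below x : derivable_pt_lim (fun t => gm * t ^ 2 / 2) x (gm * x).
Proof. apply is_derive_Reals. auto_derive; auto. field. Qed.

Lemma derivable_pt_lim_p_above x :
  derivable_pt_lim (fun t => gm * xb ^ 2 / 2 + gm * xb * (t - xb) - gp * (t - xb) ^ 2 / 2) x
                   (gm * xb - gp * (x - xb)).
Proof. apply is_derive_Reals. auto_derive; auto. field. Qed.

Lemma derivable_pt_lim_dp_below x : derivable_pt_lim (fun t => gm * t) x gm.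
Proof. apply is_derive_Reals. auto_derive; auto. ring. Qed.

Lemma derivable_pt_lim_dp_above x :
  derivable_pt_lim (fun t => gm * xb - gp * (t - xb)) x (- gp).
Proof. apply is_derive_Reals. auto_derive; auto. ring. Qed.

Lemma p_wave_deriv x : 0 < x < Rr -> derivable_pt_lim p_wave x (dp_wave x).
Proof.
  intros Hx. pose proof xb_bounds.
  destruct (Rtotal_order x xb) as [Hlt|[->|Hgt]].
  - replace (dp_wave x) with (gm * x) by split_cases.
    apply (derivable_pt_lim_locally_ext (fun t => gm * t ^ 2 / 2) _ x 0 xb);
      [lra| intros; split_cases| apply derivable_pt_lim_p_below].
  - replace (dp_wave xb) with (gm * xb) by split_cases.
    pose proof (Rmin_l xb (Rr - xb)). pose proof (Rmin_r xb (Rr - xb)).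
    apply (derivable_pt_lim_glue _ (fun t => gm * t ^ 2 / 2)
             (fun t => gm * xb ^ 2 / 2 + gm * xb * (t - xb) - gp * (t - xb) ^ 2 / 2)
             xb (Rmin xb (Rr - xb))); [apply Rmin_pos; lra| | |apply derivable_pt_lim_p_below|].
    + intros z Hz. split_cases.
    + intros z Hz. split_cases. replace z with xb by lra. field.
    + pose proof (derivable_pt_lim_p_above xb) as Hd.
      rewrite Rminus_diag, Rmult_0_r, Rminus_0_r in Hd. exact Hd.
  - replace (dp_wave x) with (gm * xb - gp * (x - xb)) by split_cases.
    apply (derivable_pt_lim_locally_ext
             (fun t => gm * xb ^ 2 / 2 + gm * xb * (t - xb) - gp * (t - xb) ^ 2 / 2) _ x xb Rr);
      [lra| intros; split_cases| apply derivable_pt_lim_p_above].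
Qed.

Lemma p_wave_cont x : 0 <= x <= Rr -> continuity_pt p_wave x.
Proof.
  intros Hx. pose proof xb_bounds. pose proof front_balance.
  destruct (Req_dec x 0) as [->|Hx0]; [|destruct (Req_dec x Rr) as [->|HxR]].
  - apply (continuity_pt_glue _ (fun _ => 0) (fun t => gm * t ^ 2 / 2) 0 xb); [lra| | | |].
    + intros z Hz. split_cases. replace z with 0 by lra. field.
    + intros z Hz. split_cases.
    + apply continuity_pt_const. intros u v. reflexivity.
    + eapply continuity_of_derivative, derivable_pt_lim_p_below.
  - apply (continuity_pt_glue _ (fun t => gm * xb ^ 2 / 2 + gm * xb * (t - xb) - gp * (t - xb) ^ 2 / 2)
             (fun _ => 0) Rr (Rr - xb)); [lra| | | |].
    + intros z Hz. split_cases.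
    + intros z Hz. split_cases. replace z with Rr by lra. lra.
    + eapply continuity_of_derivative, derivable_pt_lim_p_above.
    + apply continuity_pt_const. intros u v. reflexivity.
  - eapply continuity_of_derivative, p_wave_deriv. lra.
Qed.

Lemma dp_wave_cont x : continuity_pt dp_wave x.
Proof.
  destruct (Rtotal_order x xb) as [Hlt|[->|Hgt]].
  - apply (continuity_pt_interval_ext _ (fun t => gm * t) x (x - 1) xb);
      [lra| intros; split_cases| eapply continuity_of_derivative, derivable_pt_lim_dp_below].
  - apply (continuity_pt_glue _ (fun t => gm * t) (fun t => gm * xb - gp * (t - xb)) xb 1); [lra| | | |].
    + intros z Hz. split_cases.
    + intros z Hz. split_cases. replace z with xb by lra. ring.
    + eapply continuity_of_derivative, derivable_pt_lim_dp_below.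
    + eapply continuity_of_derivative, derivable_pt_lim_dp_above.
  - apply (continuity_pt_interval_ext _ (fun t => gm * xb - gp * (t - xb)) x xb (x + 1));
      [lra| intros; split_cases| eapply continuity_of_derivative, derivable_pt_lim_dp_above].
Qed.

Lemma dp_wave_deriv_below x : x < xb -> derivable_pt_lim dp_wave x gm.
Proof.
  intros Hx. apply (derivable_pt_lim_locally_ext (fun t => gm * t) _ x (x - 1) xb);
    [lra| intros; split_cases| apply derivable_pt_lim_dp_below].
Qed.

Lemma dp_wave_deriv_above x : xb < x -> derivable_pt_lim dp_wave x (- gp).
Proof.
  intros Hx. apply (derivable_pt_lim_locally_ext (fun t => gm * xb - gp * (t - xb)) _ x xb (x + 1));
    [lra| intros; split_cases| apply derivable_pt_lim_dp_above].
Qed.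

(* Nonnegativity above [xb]: the concave quadratic is nonnegative between
   [xb] (value [gm xb^2 / 2 >= 0]) and [R] (value 0). *)
Lemma p_wave_nonneg x : 0 <= p_wave x.
Proof.
  pose proof xb_bounds. pose proof front_balance. split_cases.
  - pose proof (pow2_ge_0 x). nra.
  - assert (Hchord : gm * xb ^ 2 / 2 + gm * xb * (x - xb) - gp * (x - xb) ^ 2 / 2
      = (Rr - x) / (Rr - xb) * (gm * xb ^ 2 / 2) + gp * (x - xb) * (Rr - x) / 2
        + (x - xb) / (Rr - xb) * (gm * xb ^ 2 / 2 + gm * xb * (Rr - xb) - gp * (Rr - xb) ^ 2 / 2))
      by (field; lra).
    rewrite Hchord, front_balance, Rmult_0_r, Rplus_0_r.
    assert (0 <= (Rr - x) / (Rr - xb)) by (apply Rdiv_le_0_compat; lra).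
    assert (0 <= gm * xb ^ 2 / 2) by (pose proof (pow2_ge_0 xb); nra).
    assert (0 <= gp * (x - xb) * (Rr - x)) by (apply Rmult_le_pos; [apply Rmult_le_pos|]; lra).
    nra.
Qed.

Lemma p_wave_origin : p_wave 0 = 0.
Proof. pose proof xb_bounds. split_cases. Qed.

Lemma p_wave_front : p_wave Rr = 0.
Proof. pose proof xb_bounds. pose proof front_balance. split_cases. Qed.

Lemma p_wave_outside x : x < 0 \/ Rr < x -> p_wave x = 0.
Proof. pose proof xb_bounds. intros Hx. split_cases. Qed.

Lemma dp_wave_front : limit1_in dp_wave (fun x => 0 < x < Rr) (- speed) Rr.
Proof.
  pose proof xb_bounds. replace (- speed) with (dp_wave Rr)
    by (rewrite speed_balance; split_cases; ring).
  apply limit1_of_continuity, dp_wave_cont.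
Qed.

Lemma dp_wave_origin : limit1_in dp_wave (fun x => 0 < x < Rr) 0 0.
Proof.
  pose proof xb_bounds. replace 0 with (dp_wave 0) at 1 by (split_cases; ring).
  apply limit1_of_continuity, dp_wave_cont.
Qed.

Lemma wave_exists : admits_monotone_TW lam nc gp gm cbar cB speed Rr.
Proof.
  pose proof xb_bounds. pose proof speed_pos.
  exists n_wave, c_wave, p_wave, [0; xb], dc_wave, dp_wave.
  repeat match goal with |- _ /\ _ => split end.
  - exact n_wave_range.
  - exact c_wave_nonneg.
  - exact p_wave_nonneg.
  - exact n_wave_cont.
  - intros x Hx _.
    replace (- (n_wave x * G gp gm cbar (c_wave x)) / speed) with (gm / speed * n_wave x)
      by (rewrite G_below by (apply c_wave_below; lra); field; lra).
    apply n_wave_deriv, Hx.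
  - exact n_wave_core.
  - exact n_wave_beyond.
  - exact c_wave_cont.
  - exact c_wave_deriv.
  - intros x _. apply dc_wave_cont.
  - exists (dc_wave Rr). apply limit1_of_continuity, dc_wave_cont.
  - intros x Hx Hnx. assert (Hx0 : x <> 0) by (intros ->; apply Hnx; left; reflexivity).
    destruct (Rlt_dec x 0) as [Hlt|Hge].
    + rewrite psi_partial, <- mu_square by (apply n_wave_left, Hlt).
      apply dc_wave_deriv_left, Hlt.
    + rewrite n_wave_core, psi_one by lra. replace lam with (a * a) by (apply sqrt_sqrt; lra).
      apply dc_wave_deriv_core. lra.
  - exact c_wave_front.
  - exact c_wave_beyond.
  - exists c0. exact c_wave_bounded.
  - intros x _. apply dc_wave_nonneg.
  - exact p_wave_cont.
  - exact p_wave_deriv.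
  - intros x _. apply dp_wave_cont.
  - intros x Hx Hnx. assert (Hxb : x <> xb) by (intros ->; apply Hnx; right; left; reflexivity).
    destruct (Rlt_dec x xb) as [Hlt|Hge].
    + rewrite G_below, Ropp_involutive by (apply c_wave_below, Hlt). apply dp_wave_deriv_below, Hlt.
    + rewrite G_above by (apply c_wave_above; lra). apply dp_wave_deriv_above. lra.
  - exact p_wave_origin.
  - exact p_wave_front.
  - exact p_wave_outside.
  - exact dp_wave_front.
  - apply n_wave_core. lra.
  - exact dp_wave_origin.
Qed.

End Construction.

Lemma monotone_wave_necessary lam nc gp gm cbar cB sigma Rr :
  0 < lam -> 0 < nc -> 0 < gp -> 0 < gm -> 0 < cbar -> cbar < cB -> 0 < sigma -> 0 < Rr ->
  admits_monotone_TW lam nc gp gm cbar cB sigma Rr ->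
  F lam nc gp gm cbar cB Rr = 0 /\ sigma = Rr * (sqrt ((gp + gm) * gm) - gm).
Proof.
  intros Hlam Hnc Hgp Hgm Hcbar HcB Hsigma HRr
    [n [c [p [D [dc [dp (Hn_range & Hc_nonneg & _ & Hn_cont & Hn_deriv & Hn_core & _ &
      Hc_cont & Hc_deriv & Hdc_cont & _ & Hdc_deriv & Hc_R & _ & Hc_bounded & Hdc_nonneg &
      Hp_cont & Hp_deriv & Hdp_cont & Hdp_deriv & Hp_0 & Hp_R & _ & Hdp_R & _ & Hdp_0)]]]]]].
  apply (necessary_conditions lam nc gp gm cbar cB sigma Rr n c p dc dp D); assumption.
Qed.

Theorem theorem3p2 (lam nc gp gm cbar cB : R) :
  0 < lam -> 0 < nc -> nc < 1 -> 0 < gp -> 0 < gm ->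
  0 < cbar -> cbar < cB ->
  (* F has a unique positive root *)
  (exists! Rr, 0 < Rr /\ F lam nc gp gm cbar cB Rr = 0) /\
  (* unique monotone traveling wave, with R the root of F and sigma explicit *)
  (exists sigma Rr,
      0 < sigma /\ 0 < Rr /\
      admits_monotone_TW lam nc gp gm cbar cB sigma Rr /\
      F lam nc gp gm cbar cB Rr = 0 /\
      sigma = Rr * (sqrt ((gp + gm) * gm) - gm) /\
      (forall sigma' Rr', 0 < sigma' -> 0 < Rr' ->
          admits_monotone_TW lam nc gp gm cbar cB sigma' Rr' ->
          sigma' = sigma /\ Rr' = Rr)) /\
  (* sigma increases with cB *)
  (forall cB' sigma Rr sigma' Rr', cB < cB' ->
      0 < sigma -> 0 < Rr -> admits_monotone_TW lam nc gp gm cbar cB sigma Rr ->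
      0 < sigma' -> 0 < Rr' -> admits_monotone_TW lam nc gp gm cbar cB' sigma' Rr' ->
      sigma < sigma') /\
  (* sigma decreases with cbar *)
  (forall cbar' sigma Rr sigma' Rr', cbar < cbar' -> cbar' < cB ->
      0 < sigma -> 0 < Rr -> admits_monotone_TW lam nc gp gm cbar cB sigma Rr ->
      0 < sigma' -> 0 < Rr' -> admits_monotone_TW lam nc gp gm cbar' cB sigma' Rr' ->
      sigma' < sigma).
Proof.
  intros Hlam Hnc Hnc1 Hgp Hgm Hcbar HcB.
  pose proof (speed_constant_pos gp gm Hgp Hgm) as HK.
  destruct (F_root_exists lam nc gp gm Hlam Hnc Hnc1 Hgp Hgm cbar cB Hcbar HcB) as [R0 [HR0 HF0]].
  split; [|split; [|split]].
  -
    exists R0. split; [split; assumption|]. intros R' [HR' HF'].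
    apply (F_root_unique lam nc gp gm Hlam Hnc Hnc1 Hgp Hgm cbar cB); lra || assumption.
  -
    exists (R0 * (sqrt ((gp + gm) * gm) - gm)), R0.
    split; [nra|]. split; [exact HR0|]. split; [apply wave_exists; assumption|].
    split; [exact HF0|]. split; [reflexivity|].
    intros s' R' Hs' HR' Hwave.
    destruct (monotone_wave_necessary lam nc gp gm cbar cB s' R') as [HF' ->]; try assumption.
    assert (R' = R0) as -> by (apply (F_root_unique lam nc gp gm Hlam Hnc Hnc1 Hgp Hgm cbar cB);
                              lra || assumption).
    split; reflexivity.
  - (* raising [cB] raises the level [cB / cbar], hence the front and the speed *)
    intros cB' s R s' R' Hlt Hs HR Hwave Hs' HR' Hwave'.
    destruct (monotone_wave_necessary lam nc gp gm cbar cB s R) as [HF ->]; try assumption.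
    destruct (monotone_wave_necessary lam nc gp gm cbar cB' s' R') as [HF' ->]; try (assumption || lra).
    assert (R < R'); [|nra].
    apply (F_roots_order lam nc gp gm Hlam Hnc Hnc1 Hgp Hgm cbar cB cbar cB'); try (assumption || lra).
    apply Rmult_lt_compat_r; [apply Rinv_0_lt_compat|]; lra.
  - (* raising [cbar] lowers the level *)
    intros cbar' s R s' R' Hlt HcB' Hs HR Hwave Hs' HR' Hwave'.
    destruct (monotone_wave_necessary lam nc gp gm cbar cB s R) as [HF ->]; try assumption.
    destruct (monotone_wave_necessary lam nc gp gm cbar' cB s' R') as [HF' ->]; try (assumption || lra).
    assert (R' < R); [|nra].
    apply (F_roots_order lam nc gp gm Hlam Hnc Hnc1 Hgp Hgm cbar' cB cbar cB); try (assumption || lra).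
    apply Rmult_lt_compat_l; [lra|]. apply Rinv_lt_contravar; nra.
Qed.
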